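(* Let $r \geq 2$, let $H$ be a digraph (possibly with loops), and let $D$ be an $H$-colored $r$-quasi-transitive digraph such that every directed cycle of length $r+1$ in $D$ is an $H$-cycle. Let $u,v\in V(D)$. If $d_{D}(u,v) \geq r$ and $T$ is a shortest directed $uv$-path in $D$, then $T$ is an $H$-path.
   Context: All digraphs are finite. A digraph $D$ is $r$-quasi-transitive if for all distinct $u,v\in V(D)$, whenever there is a directed $uv$-path of length $r$, $u$ and $v$ are joined by an arc (in some direction). $d_D(u,v)$ is the length of a shortest directed $uv$-path (here it is assumed a $uv$-path exists). $D$ has no loops and comes with a map $\rho: A(D)\to V(H)$. For a walk $W=(x_0,\ldots,x_n)$ in $D$, there is an obstruction on $x_i$ if $(\rho(x_{i-1},x_i),\rho(x_i,x_{i+1})) \notin A(H)$; for an open walk this is considered at internal vertices $x_i$, $1\le i\le n-1$, for a closed walk at all $i\in\{0,\ldots,n-1\}$ with indices modulo $n$. An $H$-path is a directed path with no obstructions (the colours of consecutive arcs form a directed walk in $H$); an $H$-cycle is a directed cycle with no obstructions, taken cyclically. *)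

From mathcomp Require Import all_boot.
Set Implicit Arguments. Unset Strict Implicit. Unset Printing Implicit Defensive.

(* A digraph D is a finite vertex type V with an arc relation e : rel V
   (no loops: e irreflexive).  H is a finite type C with arc relation hA
   (loops allowed).  An H-colouring is rho : V -> V -> C; only its values on
   arcs (x,y) with e x y matter. *)

(* A directed uv-path, given by the list [:: u, x1, ..., xn] as u :: p,
   where p is the tail; its length is size p. Vertices are pairwise distinct. *)
Definition dpath (V : eqType) (e : rel V) (u v : V) (p : seq V) : bool :=
  [&& path e u p, last u p == v & uniq (u :: p)].

Definition r_quasi_transitive (V : eqType) (e : rel V) (r : nat) : Prop :=
  forall u v : V, u != v ->
    (exists p, dpath e u v p /\ size p = r) -> e u v || e v u.

Definition is_dist (V : eqType) (e : rel V) (u v : V) (d : nat) : Prop :=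
  (exists p, dpath e u v p /\ size p = d) /\
  (forall p, dpath e u v p -> d <= size p).

Definition shortest_dpath (V : eqType) (e : rel V) (u v : V) (p : seq V) : Prop :=
  dpath e u v p /\ (forall q, dpath e u v q -> size p <= size q).

Definition no_obstruction_open (V : eqType) (C : Type) (hA : rel C)
  (rho : V -> V -> C) (s : seq V) : Prop :=
  forall (x0 : V) (i : nat), i.+2 < size s ->
    hA (rho (nth x0 s i) (nth x0 s i.+1)) (rho (nth x0 s i.+1) (nth x0 s i.+2)).

Definition H_path (V : eqType) (C : Type) (e : rel V) (hA : rel C)
  (rho : V -> V -> C) (u v : V) (p : seq V) : Prop :=
  dpath e u v p /\ no_obstruction_open hA rho (u :: p).

(* Directed cycle given by the list c = [:: x0; ...; x_{n-1}] of distinct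
   vertices with arcs x_i -> x_{i+1 mod n}; its length is size c.
   (Length >= 2 automatically when e is irreflexive.) *)
Definition dcycle (V : eqType) (e : rel V) (c : seq V) : bool :=
  (0 < size c) && cycle e c && uniq c.

Definition no_obstruction_closed (V : eqType) (C : Type) (hA : rel C)
  (rho : V -> V -> C) (c : seq V) : Prop :=
  forall (x0 : V) (i : nat), i < size c ->
    let n := size c in
    hA (rho (nth x0 c i) (nth x0 c (i.+1 %% n)))
       (rho (nth x0 c (i.+1 %% n)) (nth x0 c (i.+2 %% n))).

Definition H_cycle (V : eqType) (C : Type) (e : rel V) (hA : rel C)
  (rho : V -> V -> C) (c : seq V) : Prop :=
  dcycle e c /\ no_obstruction_closed hA rho c.

From mathcomp Require Import all_boot.
From mathcomp Require Import zify.

Set Implicit Arguments.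
Unset Strict Implicit.
Unset Printing Implicit Defensive.

(* Every internal vertex of a shortest uv-path T with |T| >= r lies inside a
   window x = T_j, ..., T_(j+r) = y of r + 1 consecutive vertices, whose
   x -> y subpath has length r.  By r-quasi-transitivity x and y are adjacent;
   an arc x -> y would shortcut T, so the arc is y -> x and closes the window
   into a directed cycle of length r + 1.  That cycle is an H-cycle, so the
   window, and hence T around the chosen vertex, has no obstruction. *)

Lemma split_seq3 (T : Type) (s : seq T) (j k : nat) : j + k < size s ->
  exists A B y C, [/\ s = A ++ B ++ y :: C, size A = j & size B = k].
Proof.
move=> lt_jk_s; exists (take j s), (take k (drop j s)).
case eD: (drop (j + k) s) => [|y C].
  by have := size_drop (j + k) s; rewrite eD /=; lia.
exists y, C; split.
- by rewrite -eD addnC -drop_drop !cat_take_drop.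
- by rewrite size_takel //; lia.
- by rewrite size_takel // size_drop; lia.
Qed.

Lemma cons_cat_window (T : Type) (u y : T) (A B C : seq T) :
  u :: A ++ B ++ y :: C = belast u A ++ (last u A :: rcons B y) ++ C.
Proof. by rewrite -cat_cons (lastI u A) cat_rcons /= cat_rcons. Qed.

Section DirectedPaths.

Variables (V : eqType) (e : rel V).

Lemma dpath_window (u v y : V) (A B C : seq V) :
  dpath e u v (A ++ B ++ y :: C) -> dpath e (last u A) y (rcons B y).
Proof.
case/and3P=> pT _; rewrite cons_cat_window !cat_uniq => /and3P [_ _ /andP [uW _]].
move: pT; rewrite !cat_path /= => /and3P [_ pB /andP [eBy _]].
by rewrite /dpath rcons_path pB eBy last_rcons eqxx.
Qed.

Lemma shortest_dpath_no_chord (u v y : V) (A B C : seq V) :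
  shortest_dpath e u v (A ++ B ++ y :: C) -> B != [::] -> ~~ e (last u A) y.
Proof.
move=> [/and3P [pT lT uT] minT] nzB; apply/negP => exy.
have shortcut : dpath e u v (A ++ y :: C).
  apply/and3P; split.
  - by move: pT; rewrite !cat_path /= exy => /and3P [-> _ /andP [_ ->]].
  - by move: lT; rewrite !last_cat.
  - apply: subseq_uniq uT; rewrite -!cat_cons.
    exact: cat_subseq (subseq_refl _) (suffix_subseq _ _).
have := minT _ shortcut; rewrite !size_cat /= -size_eq0 in nzB *; lia.
Qed.

Lemma dcycle_close (x y : V) (p : seq V) : dpath e x y p -> e y x -> dcycle e (x :: p).
Proof. by case/and3P=> px /eqP lp up eyx; rewrite /dcycle /= rcons_path px lp eyx. Qed.

End DirectedPaths.

Section Obstructions.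

Variables (V : eqType) (C : Type) (hA : rel C) (rho : V -> V -> C).

Definition unobstructed_at (x0 : V) (s : seq V) (i : nat) : bool :=
  hA (rho (nth x0 s i) (nth x0 s i.+1)) (rho (nth x0 s i.+1) (nth x0 s i.+2)).

Lemma unobstructed_at_cat (x0 : V) (s1 w s2 : seq V) (i : nat) : i.+2 < size w ->
  unobstructed_at x0 (s1 ++ w ++ s2) (size s1 + i) = unobstructed_at x0 w i.
Proof.
move=> lt_i_w; have lt_i1_w := ltnW lt_i_w; have lt_i0_w := ltnW lt_i1_w.
rewrite /unobstructed_at -!addnS !nth_cat !ltnNge !leq_addr /= !addKn.
by rewrite -!ltnNge lt_i_w lt_i1_w lt_i0_w.
Qed.

Lemma no_obstruction_closed_open (c : seq V) :
  no_obstruction_closed hA rho c -> no_obstruction_open hA rho c.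
Proof.
move=> closed x0 i lt_i_c; have := closed x0 i (ltnW (ltnW lt_i_c)).
by rewrite /= !modn_small // ltnW.
Qed.

End Obstructions.

Section QuasiTransitiveDigraph.

Variables (r : nat) (V : eqType) (C : Type) (e : rel V) (hA : rel C) (rho : V -> V -> C).
Hypothesis r_gt1 : 1 < r.
Hypothesis qtrans : r_quasi_transitive e r.
Hypothesis cycles_H : forall c, dcycle e c -> size c = r.+1 -> H_cycle e hA rho c.

Lemma shortest_dpath_window_unobstructed (u v y : V) (A B C' : seq V) :
  shortest_dpath e u v (A ++ B ++ y :: C') -> size B = r.-1 ->
  no_obstruction_open hA rho (last u A :: rcons B y).
Proof.
move=> sT sB; set x := last u A.
have pW : dpath e x y (rcons B y) := dpath_window sT.1.
have sW : size (rcons B y) = r by rewrite size_rcons sB prednK // ltnW.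
have nxy : ~~ e x y by apply: shortest_dpath_no_chord sT _; rewrite -size_eq0 sB; lia.
have neq_xy : x != y.
  by case/and3P: pW => _ _ /andP [xW _]; apply: contraNneq xW => ->; rewrite mem_rcons mem_head.
have eyx : e y x.
  by move: (qtrans neq_xy (ex_intro _ _ (conj pW sW))); rewrite (negbTE nxy).
have [_ closed] := cycles_H (dcycle_close pW eyx) (congr1 S sW).
exact: no_obstruction_closed_open.
Qed.

End QuasiTransitiveDigraph.

Theorem theorem21 (r : nat) (V C : finType) (e : rel V) (hA : rel C)
  (rho : V -> V -> C) :
  2 <= r ->
  irreflexive e ->
  r_quasi_transitive e r ->
  (forall c : seq V, dcycle e c -> size c = r.+1 -> H_cycle e hA rho c) ->
  forall (u v : V) (d : nat), is_dist e u v d -> r <= d ->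
  forall T : seq V, shortest_dpath e u v T -> H_path e hA rho u v T.
Proof.
move=> r_gt1 _ qtrans cycles_H u v d [_ dmin] le_r_d T sT.
split=> [|x0 i /= lt_i_T]; first exact: sT.1.
have le_r_T : r <= size T := leq_trans le_r_d (dmin T sT.1).
(* The window starting at j covers positions i, i+1, i+2 and ends inside T. *)
set j := minn i (size T - r).
have [A [B [y [C' [eT sA sB]]]]] := @split_seq3 _ T j r.-1 ltac:(lia).
subst T.
have lt_ij_W : (i - j).+2 < size (last u A :: rcons B y).
  by rewrite /= size_rcons sB; lia.
have := unobstructed_at_cat hA rho x0 (belast u A) C' lt_ij_W.
rewrite -cons_cat_window size_belast sA subnKC; last by lia.
rewrite /unobstructed_at => ->.
exact (shortest_dpath_window_unobstructed r_gt1 qtrans cycles_H sT sB x0 lt_ij_W).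
Qed.
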